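(* Let $G_1$ and $G_2$ be groups, and for $t=1,2$ let $\vec H^{(t)}\colon\{1\}=H^{(t)}_0\triangleleft\dots\triangleleft H^{(t)}_n=G_t$ and $\vec K^{(t)}\colon\{1\}=K^{(t)}_0\triangleleft\dots\triangleleft K^{(t)}_n=G_t$ be composition series of $G_t$ (of the same length $n$). Let $\pi_t$ be the unique permutation of $\{1,\dots,n\}$ such that $H^{(t)}_i/H^{(t)}_{i-1}$ is subnormally down-and-up projective to $K^{(t)}_{\pi_t(i)}/K^{(t)}_{\pi_t(i)-1}$ for all $i$. If $\pi_1=\pi_2$, then the lattices $(\mathrm{CSL}(\vec H^{(1)},\vec K^{(1)});\subseteq)$ and $(\mathrm{CSL}(\vec H^{(2)},\vec K^{(2)});\subseteq)$ are isomorphic. That is, this permutation determines $\mathrm{CSL}(\vec H,\vec K)$ up to lattice isomorphism.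
   Context: For composition series $\vec H$, $\vec K$ of a group $G$, $\mathrm{CSL}(\vec H,\vec K)=\{H_i\cap K_j: 0\le i,j\le n\}$, ordered by inclusion; it is a lattice. For subnormal subgroups $A\triangleleft B$ and $C\triangleleft D$ of $G$, $B/A$ is subnormally down-and-up projective to $D/C$ if there are subnormal subgroups $X\triangleleft Y$ of $G$ with $AY=B$, $A\cap Y=X$, $CY=D$, $C\cap Y=X$. It is known (and used here) that for composition series $\vec H,\vec K$ of the same group there is a unique permutation $\pi$ of $\{1,\dots,n\}$ such that $H_i/H_{i-1}$ is subnormally down-and-up projective to $K_{\pi(i)}/K_{\pi(i)-1}$ for all $i$. *)

(* Groups are ABSTRACT, possibly infinite: a carrier type with operations
   and group axioms.  Subsets are Prop-valued predicates. *)
From mathcomp Require Import all_boot all_fingroup.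

Set Implicit Arguments.
Unset Strict Implicit.
Unset Printing Implicit Defensive.

Record absgroup := AbsGroup {
  gcar :> Type;
  gmul : gcar -> gcar -> gcar;
  gone : gcar;
  ginv : gcar -> gcar;
  gmulA : forall x y z, gmul x (gmul y z) = gmul (gmul x y) z;
  gmul1g : forall x, gmul gone x = x;
  gmulVg : forall x, gmul (ginv x) x = gone
}.

Arguments gone {a}.

Section GroupDefs.
Variable G : absgroup.

Definition gset := G -> Prop.

Definition gsubset (A B : gset) : Prop := forall x, A x -> B x.
Definition gseteq (A B : gset) : Prop := forall x, A x <-> B x.
Definition gsetI (A B : gset) : gset := fun x => A x /\ B x.
Definition gsetM (A B : gset) : gset :=
  fun x => exists a b, A a /\ B b /\ x = gmul a b.
Definition gset1 : gset := fun x => x = gone.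
Definition gsetT : gset := fun _ => True.

Definition is_subgroup (A : gset) : Prop :=
  [/\ A gone, (forall x y, A x -> A y -> A (gmul x y))
    & (forall x, A x -> A (ginv x))].

Definition gnormal (A B : gset) : Prop :=
  [/\ is_subgroup A, is_subgroup B, gsubset A B
    & forall a b, A a -> B b -> A (gmul (ginv b) (gmul a b))].

Inductive subnormal : gset -> Prop :=
  | subnormal_top : forall A, gseteq A gsetT -> subnormal A
  | subnormal_step : forall A B, gnormal A B -> subnormal B -> subnormal A.

(* B / A is a simple group, for A <| B:  A is a maximal proper normal
   subgroup of B (correspondence theorem) *)
Definition simple_factor (A B : gset) : Prop :=
  [/\ gnormal A B, ~ gseteq A B
    & forall N, gnormal N B -> gsubset A N -> gseteq N A \/ gseteq N B].

Definition comp_series (n : nat) (H : nat -> gset) : Prop :=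
  [/\ gseteq (H 0) gset1, gseteq (H n) gsetT
    & forall i, i < n -> simple_factor (H i) (H i.+1)].

Definition sdu_projective (A B C D : gset) : Prop :=
  [/\ subnormal A, subnormal B & gnormal A B] /\
  [/\ subnormal C, subnormal D & gnormal C D] /\
  exists X Y : gset,
    [/\ subnormal X, subnormal Y & gnormal X Y] /\
    [/\ gseteq (gsetM A Y) B, gseteq (gsetI A Y) X,
        gseteq (gsetM C Y) D & gseteq (gsetI C Y) X].

(* pi : permutation of {1..n}, encoded on 'I_n via i <-> i+1:
   H_{i+1}/H_i is projective to K_{pi(i)+1}/K_{pi(i)} for all i *)
Definition perm_projective (n : nat) (H K : nat -> gset)
    (pi : {perm 'I_n}) : Prop :=
  forall i : 'I_n, sdu_projective (H i) (H i.+1) (K (pi i)) (K (pi i).+1).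

Definition CSL (n : nat) (H K : nat -> gset) : Type :=
  {S : gset | exists i j, [/\ i <= n, j <= n & S = gsetI (H i) (K j)]}.

End GroupDefs.
Arguments perm_projective [G] n H K pi.

Arguments gset1 {G}.
Arguments gsetT {G}.

(* The inclusion H_i ∩ K_j ⊆ H_i' ∩ K_j' is decided by π alone: it holds iff
   every m with m < i and π m < j also has m < i' and π m < j'.  Say that K_j
   meets the factor H_{i+1}/H_i when H_{i+1} ∩ K_j ⊄ H_i; this is monotone in j,
   and H_i ∩ K_j ⊄ H_i' exactly when K_j meets some factor H_{m+1}/H_m with
   i' <= m < i.  As H_i is maximal normal in H_{i+1}, the Schreier term
   H_i (H_{i+1} ∩ K_j) is H_i or H_{i+1}, so K_j first meets H_{i+1}/H_i at the
   j where the Zassenhaus factor (H_{i+1} ∩ K_{j+1}) / (H_i ∩ K_{j+1})(H_{i+1} ∩ K_j)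
   is nontrivial.  That condition is symmetric in H and K, hence i ↦ j is
   injective; projectivity bounds it by π i, and an injection of 'I_n bounded
   pointwise by a permutation is that permutation. *)
From mathcomp Require Import all_boot all_fingroup.
From Stdlib Require Import Classical ClassicalEpsilon FunctionalExtensionality
  PropExtensionality ProofIrrelevance.

Set Implicit Arguments.
Unset Strict Implicit.
Unset Printing Implicit Defensive.

Section GroupLemmas.
Variable G : absgroup.
Implicit Types (x y : G) (A B C D : gset G).

Lemma gmulgV x : gmul x (ginv x) = gone.
Proof.
rewrite -[gmul x _]gmul1g -{1}(gmulVg (ginv x)) -gmulA (gmulA (ginv x)).
by rewrite gmulVg gmul1g gmulVg.
Qed.

Lemma gmulg1 x : gmul x gone = x.
Proof. by rewrite -(gmulVg x) gmulA gmulgV gmul1g. Qed.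

Lemma gmulKg x y : gmul (ginv x) (gmul x y) = y.
Proof. by rewrite gmulA gmulVg gmul1g. Qed.

Lemma gmulKVg x y : gmul x (gmul (ginv x) y) = y.
Proof. by rewrite gmulA gmulgV gmul1g. Qed.

Lemma gmul_eq1 x y : gmul x y = gone -> y = ginv x.
Proof. by move=> e; rewrite -(gmulKg x y) e gmulg1. Qed.

Lemma ginvK x : ginv (ginv x) = x.
Proof. by symmetry; apply: gmul_eq1; rewrite gmulVg. Qed.

Lemma ginvM x y : ginv (gmul x y) = gmul (ginv y) (ginv x).
Proof. by symmetry; apply: gmul_eq1; rewrite -gmulA gmulKVg gmulgV. Qed.

Lemma gsubset_anti A B : gsubset A B -> gsubset B A -> A = B.
Proof.
move=> sAB sBA; apply: functional_extensionality => x.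
by apply: propositional_extensionality; split; [apply: (sAB) | apply: sBA].
Qed.

Lemma is_subgroup_eq A B : gseteq A B -> is_subgroup A -> is_subgroup B.
Proof.
move=> eAB [A1 AM AV]; split; first exact/eAB.
  by move=> x y /eAB Ax /eAB Ay; apply/eAB/AM.
by move=> x /eAB Ax; apply/eAB/AV.
Qed.

Lemma normal_conjV A B a b :
  gnormal A B -> A a -> B b -> A (gmul b (gmul a (ginv b))).
Proof.
move=> [_ [_ _ BV] _ nAB] Aa Bb.
by have := nAB a (ginv b) Aa (BV _ Bb); rewrite ginvK.
Qed.

Lemma mulI_subgroup A B C :
  gnormal A B -> is_subgroup C -> is_subgroup (gsetM A (gsetI B C)).
Proof.
move=> nAB [C1 CM CV]; have [[A1 AM AV] [B1 BM BV] _ nA] := nAB.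
split.
- by exists gone, gone; rewrite gmulg1; split=> //; split=> //; split.
- move=> _ _ [a1 [y1 [Aa1 [[By1 Cy1] ->]]]] [a2 [y2 [Aa2 [[By2 Cy2] ->]]]].
  exists (gmul a1 (gmul y1 (gmul a2 (ginv y1)))), (gmul y1 y2).
  split; first by apply: (AM) => //; apply: (normal_conjV nAB).
  by split; [split; [apply: (BM) | apply: (CM)] | rewrite -!gmulA gmulKg].
- move=> _ [a [y [Aa [[By Cy] ->]]]].
  exists (gmul (ginv y) (gmul (ginv a) y)), (ginv y).
  split; first by apply: (nA) => //; apply: (AV).
  by split; [split; [apply: (BV) | apply: (CV)] | rewrite ginvM -!gmulA gmulgV gmulg1].
Qed.

Lemma mulI_normal A B C D :
  gnormal A B -> gnormal C D -> gsubset B (gsetM A (gsetI B D)) ->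
  gnormal (gsetM A (gsetI B C)) B.
Proof.
move=> nAB nCD sBAD; have [[_ AM AV] sB sAB nA] := nAB.
have [sC _ _ nC] := nCD; have [_ BM BV] := sB.
split=> //; first exact: mulI_subgroup.
  by move=> _ [a [y [Aa [[By _] ->]]]]; apply: (BM) => //; apply: (sAB).
move=> _ b [a [y [Aa [[By Cy] ->]]]] /sBAD [a2 [d [Aa2 [[Bd Dd] ->]]]].
exists (gmul (ginv d) (gmul (gmul (ginv a2) (gmul a (gmul y (gmul a2 (ginv y))))) d)),
       (gmul (ginv d) (gmul y d)).
split.
  apply: (nA) => //; apply: (AM); first exact: AV.
  by apply: (AM) => //; apply: (normal_conjV nAB).
split; first by split; [apply: (BM); [apply: (BV) | apply: (BM)] | apply: (nC)].
by rewrite ginvM -!gmulA gmulKVg gmulKg.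
Qed.

Lemma mulI_swap A B C D :
  gnormal A B -> gsubset C D -> is_subgroup D ->
  gsubset (gsetM (gsetI A D) (gsetI B C)) (gsetM (gsetI C B) (gsetI D A)).
Proof.
move=> [_ [_ BM BV] _ nAB] sCD [_ DM DV] _ [a [y [[Aa Da] [[By Cy] ->]]]].
exists y, (gmul (ginv y) (gmul a y)); split=> //; split; last by rewrite gmulKVg.
split; last exact: nAB.
by apply: (DM); [apply/(DV)/sCD | apply: (DM) => //; apply: (sCD)].
Qed.

End GroupLemmas.

Section CompositionSeries.
Variables (G : absgroup) (n : nat) (Z : nat -> gset G).
Hypothesis hZ : comp_series n Z.

Lemma comp_series_normal i : i < n -> gnormal (Z i) (Z i.+1).
Proof. by case: hZ => _ _ Zs /Zs []. Qed.

Lemma comp_series_max i : i < n ->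
  forall N, gnormal N (Z i.+1) -> gsubset (Z i) N -> gseteq N (Z i) \/ gseteq N (Z i.+1).
Proof. by case: hZ => _ _ Zs /Zs []. Qed.

Lemma comp_series_proper i : i < n -> ~ gseteq (Z i) (Z i.+1).
Proof. by case: hZ => _ _ Zs /Zs []. Qed.

Lemma comp_series_subgroup i : i <= n -> is_subgroup (Z i).
Proof.
rewrite leq_eqVlt => /orP [/eqP -> | /comp_series_normal []//].
by case: hZ => _ Zn _; apply: (@is_subgroup_eq _ gsetT) => // x; split=> /Zn.
Qed.

Lemma comp_series1 i : i <= n -> Z i gone.
Proof. by case/comp_series_subgroup. Qed.

Lemma comp_series_mono i i' : i <= i' -> i' <= n -> gsubset (Z i) (Z i').
Proof.
move=> le_ii'; rewrite -(subnKC le_ii'); elim: (i' - i) => [|k IHk].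
  by rewrite addn0 => _ x.
rewrite addnS => lt_n x /(IHk (ltnW lt_n)).
by have [_ _ sZ _] := comp_series_normal lt_n; apply: sZ.
Qed.

End CompositionSeries.

Section TwoSeries.
Variables (G : absgroup) (n : nat) (X Y : nat -> gset G).
Hypotheses (hX : comp_series n X) (hY : comp_series n Y).

Definition meets_factor i j := exists x, [/\ X i.+1 x, Y j x & ~ X i x].

Definition schreier_set i j := gsetM (X i) (gsetI (X i.+1) (Y j)).

Definition zassenhaus_nontrivial i j := exists x,
  [/\ X i.+1 x, Y j.+1 x & ~ gsetM (gsetI (X i) (Y j.+1)) (gsetI (X i.+1) (Y j)) x].

Lemma meets_factor_mono i j j' :
  meets_factor i j -> j <= j' -> j' <= n -> meets_factor i j'.
Proof.
move=> [x [Xx Yx nXx]] le_jj' le_j'n; exists x; split=> //.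
exact: (comp_series_mono hY le_jj' le_j'n Yx).
Qed.

Lemma meets_factor0 i : i <= n -> ~ meets_factor i 0.
Proof.
move=> le_in [x [_ Y0x nXx]]; have [Y0 _ _] := hY.
by apply: nXx; rewrite (Y0 x).1 //; exact: (comp_series1 hX le_in).
Qed.

Lemma not_meets_factor i j :
  ~ meets_factor i j -> gsubset (gsetI (X i.+1) (Y j)) (X i).
Proof. by move=> nM x [Xx Yx]; apply: NNPP => nXx; apply: nM; exists x. Qed.

Lemma meets_factor_jump i j0 j : j0 < n -> j <= n ->
  ~ meets_factor i j0 -> meets_factor i j0.+1 -> (meets_factor i j <-> j0 < j).
Proof.
move=> lt_j0n le_jn nM0 M1; split=> [Mj | lt_j0j].
  rewrite ltnNge; apply/negP => le_jj0.
  exact: nM0 (meets_factor_mono Mj le_jj0 (ltnW lt_j0n)).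
exact: meets_factor_mono M1 lt_j0j le_jn.
Qed.

Lemma schreier_set_cases i j : i < n -> j <= n ->
  gseteq (schreier_set i j) (X i) \/ gseteq (schreier_set i j) (X i.+1).
Proof.
move=> lt_in; have nX := comp_series_normal hX lt_in.
have [_ [_ XM _] sX _] := nX.
have sub_next k : gsubset (schreier_set i k) (X i.+1).
  by move=> _ [a [y [Xa [[Xy _] ->]]]]; apply: (XM) => //; apply: (sX).
have sub_prev k : k <= n -> gsubset (X i) (schreier_set i k).
  move=> le_kn a Xa; exists a, gone; rewrite gmulg1; split=> //; split=> //.
  by split; [exact: (comp_series1 hX (lt_in : i.+1 <= n)) | exact: (comp_series1 hY le_kn)].
move=> le_jn; rewrite -(subKn le_jn); elim: (n - j) => [|k IHk].
  rewrite subn0; right=> x; split; first exact: sub_next.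
  move=> Xx; exists gone, x; rewrite gmul1g.
  split; first exact: (comp_series1 hX (ltnW lt_in)).
  by split=> //; split=> //; have [_ Yn _] := hY; exact: (Yn x).2.
rewrite subnS; have [nk0 | nk_gt0] := posnP (n - k); first by move: IHk; rewrite nk0.
have eSk : (n - k).-1.+1 = n - k by rewrite prednK.
have lt_pn : (n - k).-1 < n by rewrite eSk leq_subr.
have nY := comp_series_normal hY lt_pn; rewrite eSk in nY.
have [eX | eXS] := IHk.
  left=> x; split; last exact: sub_prev (ltnW lt_pn) x.
  move=> [a [y [Xa [[Xy Yy] ->]]]]; apply/eX; exists a, y; split=> //; split=> //.
  by split=> //; have [_ _ sY _] := nY; apply: (sY).
apply: (comp_series_max hX lt_in); last exact: sub_prev (ltnW lt_pn).
by apply: (mulI_normal nX nY) => x /eXS.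
Qed.

Lemma schreier_set_full i j : i < n -> j <= n -> meets_factor i j ->
  gsubset (X i.+1) (schreier_set i j).
Proof.
move=> lt_in le_jn [y [Xy Yy nXy]] x Xx.
case: (schreier_set_cases lt_in le_jn) => [eX | eXS]; last exact/eXS.
case: nXy; apply/eX; exists gone, y; rewrite gmul1g.
by split; [exact: (comp_series1 hX (ltnW lt_in)) | do 2!split].
Qed.

Lemma meets_factor_jump_zassenhaus i j : i < n -> j < n ->
  (~ meets_factor i j /\ meets_factor i j.+1) <-> zassenhaus_nontrivial i j.
Proof.
move=> lt_in lt_jn; have [[_ XM _] _ _ _] := comp_series_normal hX lt_in.
split=> [[nM [x [Xx Yx nXx]]] | [x [Xx Yx nx]]].
  exists x; split=> // -[a [y [[Xa _] [[Xy Yy] ex]]]]; apply: nXx.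
  by rewrite ex; apply: (XM) => //; exact: (not_meets_factor nM (conj Xy Yy)).
split.
  move=> /(schreier_set_full lt_in (ltnW lt_jn)) /(_ x Xx) [a [y [Xa [[Xy Yy] ex]]]].
  apply: nx; exists a, y; split; last by [].
  split=> //; have [_ [_ YM YV] sY _] := comp_series_normal hY lt_jn.
  have -> : a = gmul x (ginv y) by rewrite ex -gmulA gmulgV gmulg1.
  by apply: (YM) => //; apply/(YV)/sY.
exists x; split=> // Xix; apply: nx; exists x, gone; rewrite gmulg1; do 2!split=> //.
by split; [exact: (comp_series1 hX lt_in) | exact: (comp_series1 hY (ltnW lt_jn))].
Qed.

Lemma setI_sub_series_iff (rho : 'I_n -> 'I_n) :
    (forall (m : 'I_n) j, j <= n -> meets_factor m j <-> rho m < j) ->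
  forall i j i', i <= n -> j <= n -> i' <= n ->
  gsubset (gsetI (X i) (Y j)) (X i') <->
  (forall m : 'I_n, m < i -> rho m < j -> m < i').
Proof.
move=> rhoP i j i' le_in le_jn le_i'n; split.
  move=> sub m lt_mi lt_rj; rewrite ltnNge; apply/negP => le_i'm.
  have [x [Xx Yx nXx]] := (rhoP m j le_jn).2 lt_rj.
  apply/nXx/(comp_series_mono hX le_i'm (ltnW (ltn_ord m)))/sub.
  by split=> //; apply: (comp_series_mono hX lt_mi le_in Xx).
elim: i le_in => [|k IHk] le_kn rhoS.
  by move=> x [X0x _]; apply: (comp_series_mono hX (leq0n _) le_i'n X0x).
have [le_ki' | lt_i'k] := leqP k.+1 i'.
  by move=> x [Xx _]; apply: (comp_series_mono hX le_ki' le_i'n Xx).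
have nM : ~ meets_factor (Ordinal le_kn) j.
  move=> /(rhoP _ j le_jn) /(rhoS (Ordinal le_kn) (ltnSn k)).
  by move=> lt_ki'; move: lt_i'k; rewrite ltnS leqNgt lt_ki'.
move=> x [Xx Yx]; apply: (IHk (ltnW le_kn)) => [m lt_mk | ].
  exact: rhoS (ltnW lt_mk).
by split=> //; exact: (not_meets_factor nM (conj Xx Yx)).
Qed.

End TwoSeries.

Lemma zassenhaus_nontrivialC (G : absgroup) n (X Y : nat -> gset G) i j :
  comp_series n X -> comp_series n Y -> i < n -> j < n ->
  zassenhaus_nontrivial X Y i j <-> zassenhaus_nontrivial Y X j i.
Proof.
move=> hX hY lt_in lt_jn.
have nX := comp_series_normal hX lt_in; have nY := comp_series_normal hY lt_jn.
have [_ sXS sX _] := nX; have [_ sYS sY _] := nY.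
split=> -[x [Xx Yx nx]]; exists x; split=> // hx; apply: nx.
  exact: mulI_swap nY sX sXS _ hx.
exact: mulI_swap nX sY sYS _ hx.
Qed.

Lemma injective_leq_perm_eq n (s : 'I_n -> 'I_n) (p : {perm 'I_n}) :
  injective s -> (forall i, s i <= p i) -> forall i, s i = p i :> nat.
Proof.
move=> s_inj le_sp.
have sum_s : \sum_(i : 'I_n) (s i : nat) = \sum_(i : 'I_n) (i : nat).
  by rewrite [RHS](reindex_inj s_inj).
have sum_p : \sum_(i : 'I_n) (p i : nat) = \sum_(i : 'I_n) (i : nat).
  by rewrite [RHS](reindex_inj (@perm_inj _ p)).
have [_] := leqif_sum (fun i (_ : true) => leqif_eq (le_sp i)).
rewrite sum_s sum_p eqxx => /esym /forallP eq_sp i.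
exact/eqP/(implyP (eq_sp i)).
Qed.

Definition classicb (P : Prop) : bool :=
  if excluded_middle_informative P then true else false.

Lemma classicbP (P : Prop) : reflect P (classicb P).
Proof. by rewrite /classicb; case: excluded_middle_informative => ?; constructor. Qed.

Definition perm_rect n (pi : {perm 'I_n}) (i j : nat) : {set 'I_n} :=
  [set m : 'I_n | (m < i) && (pi m < j)].

Section Projective.
Variables (G : absgroup) (n : nat) (H K : nat -> gset G) (pi : {perm 'I_n}).
Hypotheses (hH : comp_series n H) (hK : comp_series n K)
  (hpi : perm_projective n H K pi).

(* The Y of the projectivity lies in H_{i+1} ∩ K_{pi i+1}, and H_i Y = H_{i+1}
   forbids Y ⊆ H_i. *)
Lemma meets_factor_projective (i : 'I_n) : meets_factor H K i (pi i).+1.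
Proof.
have [[_ _ [sA _ _ _]] [[_ _ [sC _ _ _]] [_ [Y [_ [eB _ eD _]]]]]] := hpi i.
have [_ _ sH _] := comp_series_normal hH (ltn_ord i).
have sYB : gsubset Y (H i.+1).
  by move=> y Yy; apply/eB; exists gone, y; split; [case: sA | rewrite gmul1g].
have sYD : gsubset Y (K (pi i).+1).
  by move=> y Yy; apply/eD; exists gone, y; split; [case: sC | rewrite gmul1g].
apply: NNPP => nM; apply: (comp_series_proper hH (ltn_ord i)) => x.
split=> [/sH // | /eB [a [y [Ha [Yy ->]]]]].
have [_ HM _] := sA; apply: (HM) => //.
exact: (not_meets_factor nM (conj (sYB y Yy) (sYD y Yy))).
Qed.

Lemma exists_meets_factor (i : 'I_n) : exists j, classicb (meets_factor H K i j.+1).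
Proof. by exists (pi i); apply/classicbP/meets_factor_projective. Qed.

Definition jump_index (i : 'I_n) : nat := ex_minn (exists_meets_factor i).

Lemma jump_index_le (i : 'I_n) : jump_index i <= pi i.
Proof.
rewrite /jump_index; case: ex_minnP => j _; apply.
exact/classicbP/meets_factor_projective.
Qed.

Lemma jump_index_lt (i : 'I_n) : jump_index i < n.
Proof. exact: leq_ltn_trans (jump_index_le i) (ltn_ord _). Qed.

Lemma jump_indexP (i : 'I_n) :
  ~ meets_factor H K i (jump_index i) /\ meets_factor H K i (jump_index i).+1.
Proof.
rewrite /jump_index; case: ex_minnP => -[|j] /classicbP Mj minj; split=> //.
  exact: (meets_factor0 hH hK (ltnW (ltn_ord i))).
move=> Mj1; have := minj j (introT (classicbP _) Mj1).
by rewrite ltnn.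
Qed.

Lemma jump_index_dual (i : 'I_n) :
  ~ meets_factor K H (jump_index i) i /\ meets_factor K H (jump_index i) i.+1.
Proof.
apply/(meets_factor_jump_zassenhaus hK hH (jump_index_lt i) (ltn_ord i)).
apply/(zassenhaus_nontrivialC hH hK (ltn_ord i) (jump_index_lt i)).
exact/(meets_factor_jump_zassenhaus hH hK (ltn_ord i) (jump_index_lt i))/jump_indexP.
Qed.

Lemma jump_index_inj : injective (fun i => Ordinal (jump_index_lt i)).
Proof.
move=> i1 i2 /(congr1 val) e12; apply: val_inj.
have {}e12 : jump_index i1 = jump_index i2 := e12.
have [nM1 M1] := jump_index_dual i1; have [nM2 M2] := jump_index_dual i2.
rewrite e12 in nM1 M1.
have le12 := (meets_factor_jump hH (ltn_ord i1) (ltn_ord i2) nM1 M1).1 M2.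
have le21 := (meets_factor_jump hH (ltn_ord i2) (ltn_ord i1) nM2 M2).1 M1.
by apply/eqP; rewrite eqn_leq -ltnS le12 -ltnS le21.
Qed.

Lemma jump_indexE (i : 'I_n) : jump_index i = pi i.
Proof. exact: injective_leq_perm_eq jump_index_inj jump_index_le i. Qed.

Lemma meets_factor_perm (i : 'I_n) j : j <= n -> meets_factor H K i j <-> pi i < j.
Proof.
have [nM M] := jump_indexP i; rewrite jump_indexE in nM M.
by move=> le_jn; exact: (meets_factor_jump hK (ltn_ord (pi i)) le_jn nM M).
Qed.

Lemma meets_factor_permV (j : 'I_n) i :
  i <= n -> meets_factor K H j i <-> (pi^-1)%g j < i.
Proof.
have [nM M] := jump_index_dual ((pi^-1)%g j); rewrite jump_indexE permKV in nM M.
by move=> le_in; exact: (meets_factor_jump hH (ltn_ord ((pi^-1)%g j)) le_in nM M).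
Qed.

Lemma setI_sub_perm_rect i j i' j' : i <= n -> j <= n -> i' <= n -> j' <= n ->
  gsubset (gsetI (H i) (K j)) (gsetI (H i') (K j')) <->
  perm_rect pi i j \subset perm_rect pi i' j'.
Proof.
move=> le_in le_jn le_i'n le_j'n.
have subH := setI_sub_series_iff hH meets_factor_perm le_in le_jn le_i'n.
have subK := setI_sub_series_iff hK meets_factor_permV le_jn le_in le_j'n.
have swapI (A B : gset G) : gseteq (gsetI A B) (gsetI B A) by move=> x; split=> -[].
split=> [sub | /subsetP sub].
  apply/subsetP => m; rewrite !inE => /andP [lt_mi lt_pj].
  apply/andP; split; first by apply: subH.1 m lt_mi lt_pj => x /sub [].
  have := subK.1 _ (pi m); rewrite permK; apply=> //.
  by move=> x /swapI /sub [].
move=> x [Hx Kx]; split.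
  apply: (subH.2 _ x (conj Hx Kx)) => m lt_mi lt_pj.
  by have := sub m; rewrite !inE lt_mi lt_pj => /(_ isT) /andP [].
apply: (subK.2 _ x (conj Kx Hx)) => m lt_mj lt_im.
by have := sub ((pi^-1)%g m); rewrite !inE lt_im permKV lt_mj => /(_ isT) /andP [].
Qed.

End Projective.

Section CSLTransport.
Variable n : nat.

Lemma csl_val_inj (G : absgroup) (H K : nat -> gset G) (S T : CSL n H K) :
  sval S = sval T -> S = T.
Proof.
by case: S T => [s ?] [t ?] /= es; subst t; congr exist; apply: proof_irrelevance.
Qed.

Lemma csl_index_subproof (G : absgroup) (H K : nat -> gset G) (S : CSL n H K) :
  exists p : nat * nat, [/\ p.1 <= n, p.2 <= n & sval S = gsetI (H p.1) (K p.2)].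
Proof. by have [i [j [le_in le_jn eS]]] := svalP S; exists (i, j). Qed.

Definition csl_index (G : absgroup) (H K : nat -> gset G) (S : CSL n H K) : nat * nat :=
  sval (constructive_indefinite_description _ (csl_index_subproof S)).

Lemma csl_indexP (G : absgroup) (H K : nat -> gset G) (S : CSL n H K) :
  [/\ (csl_index S).1 <= n, (csl_index S).2 <= n
    & sval S = gsetI (H (csl_index S).1) (K (csl_index S).2)].
Proof. exact: (svalP (constructive_indefinite_description _ (csl_index_subproof S))). Qed.

Variables (Ga Gb : absgroup) (Ha Ka : nat -> gset Ga) (Hb Kb : nat -> gset Gb).

Lemma csl_transport_subproof (S : CSL n Ha Ka) : exists i j, [/\ i <= n, j <= n &
  gsetI (Hb (csl_index S).1) (Kb (csl_index S).2) = gsetI (Hb i) (Kb j)].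
Proof.
by have [le_in le_jn _] := csl_indexP S; exists (csl_index S).1, (csl_index S).2.
Qed.

(* Well defined because of [csl_transportK] below: equal intersections on one
   side are equal on the other, whichever indices are chosen. *)
Definition csl_transport (S : CSL n Ha Ka) : CSL n Hb Kb :=
  exist _ _ (csl_transport_subproof S).

Lemma csl_transportP (S : CSL n Ha Ka) : exists i j, [/\ i <= n, j <= n,
  sval S = gsetI (Ha i) (Ka j) & sval (csl_transport S) = gsetI (Hb i) (Kb j)].
Proof.
by have [le_in le_jn eS] := csl_indexP S; exists (csl_index S).1, (csl_index S).2.
Qed.

End CSLTransport.

Definition same_inclusions (Ga Gb : absgroup) n (Ha Ka : nat -> gset Ga)
    (Hb Kb : nat -> gset Gb) :=
  forall i j i' j', i <= n -> j <= n -> i' <= n -> j' <= n ->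
  gsubset (gsetI (Ha i) (Ka j)) (gsetI (Ha i') (Ka j')) <->
  gsubset (gsetI (Hb i) (Kb j)) (gsetI (Hb i') (Kb j')).

Section SameInclusions.
Variables (Ga Gb : absgroup) (n : nat) (Ha Ka : nat -> gset Ga) (Hb Kb : nat -> gset Gb).
Hypothesis same : same_inclusions n Ha Ka Hb Kb.

Lemma same_inclusionsC : same_inclusions n Hb Kb Ha Ka.
Proof. by move=> i j i' j' *; apply: iff_sym; apply: same. Qed.

Lemma csl_transport_mono (S T : CSL n Ha Ka) :
  gsubset (sval S) (sval T) <->
  gsubset (sval (csl_transport Hb Kb S)) (sval (csl_transport Hb Kb T)).
Proof.
have [i [j [le_in le_jn -> ->]]] := csl_transportP Hb Kb S.
have [i' [j' [le_i'n le_j'n -> ->]]] := csl_transportP Hb Kb T.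
exact: same.
Qed.

Lemma csl_transportK :
  cancel (csl_transport Hb Kb : CSL n Ha Ka -> _) (csl_transport Ha Ka).
Proof.
move=> S; apply: csl_val_inj.
have [i [j [le_in le_jn eS eTS]]] := csl_transportP Hb Kb S.
have [i' [j' [le_i'n le_j'n eTS' ->]]] := csl_transportP Ha Ka (csl_transport Hb Kb S).
rewrite eS; rewrite eTS in eTS'.
by apply: gsubset_anti; apply/same => //; rewrite eTS'.
Qed.

End SameInclusions.

Theorem corollary3p4 (G1 G2 : absgroup) (n : nat)
    (H1 K1 : nat -> gset G1) (H2 K2 : nat -> gset G2)
    (pi1 pi2 : {perm 'I_n}) :
  comp_series n H1 -> comp_series n K1 ->
  comp_series n H2 -> comp_series n K2 ->
  perm_projective n H1 K1 pi1 -> perm_projective n H2 K2 pi2 ->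
  pi1 = pi2 ->
  exists f : CSL n H1 K1 -> CSL n H2 K2,
    bijective f /\
    forall S T : CSL n H1 K1,
      gsubset (sval S) (sval T) <-> gsubset (sval (f S)) (sval (f T)).
Proof.
move=> hH1 hK1 hH2 hK2 pi1P pi2P e12; subst pi2.
have same12 : same_inclusions n H1 K1 H2 K2.
  move=> i j i' j' *; rewrite (setI_sub_perm_rect hH1 hK1 pi1P) //.
  by rewrite (setI_sub_perm_rect hH2 hK2 pi2P).
exists (csl_transport H2 K2); split; last exact: csl_transport_mono same12.
exists (csl_transport H1 K1); first exact: csl_transportK same12.
exact: csl_transportK (same_inclusionsC same12).
Qed.
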